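(* Assume the Perturbed Composite Setting (see context). Suppose $\varepsilon\le\mu^2/(14\rho)$, let $\widetilde{\mathcal{T}}_1:=\{z\in\mathcal{X}:\frac{14\varepsilon}{\mu}<\mathrm{dist}(z,\mathcal{X}^* )<\frac{\mu}{4\rho}\}$, $\tilde L:=\sup\{\|\zeta\|:\zeta\in\partial\tilde f(x),x\in\widetilde{\mathcal{T}}_1\}$ (assumed finite) and $\tilde\tau=\mu/\tilde L$. Run the modified Polyak method: given $x_k$ choose $\zeta_k\in\partial\tilde f(x_k)$; if $\zeta_k=0$ stop, otherwise $x_{k+1}=\mathrm{proj}_{\mathcal{X}}\big(x_k-\frac{\tilde f(x_k)-\min_{\mathcal{X}}f}{\|\zeta_k\|^2}\zeta_k\big)$, starting from $x_0\in\widetilde{\mathcal{T}}_1$. Let $K$ be the first index with $\mathrm{dist}(x_K,\mathcal{X}^* )\le14\varepsilon/\mu$ ($K=\infty$ if there is none). Then the method does not stop before $K$, $x_k\in\widetilde{\mathcal{T}}_1$ for all $0\le k<K$, and $$\mathrm{dist}^2(x_{k+1},\mathcal{X}^* )\le\Big(1-\frac{13\tilde\tau^2}{56}\Big)\mathrm{dist}^2(x_k,\mathcal{X}^* )\quad\text{for all }0\le k<K.$$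
   Context: Perturbed Composite Setting: $\mathbf{E},\mathbf{Y}$ are Euclidean spaces ($\|\cdot\|$ the Euclidean norm on $\mathbf{E}$), $\mathcal{X}\subset\mathbf{E}$ nonempty closed convex, $F\colon\mathbf{E}\to\mathbf{Y}$ continuously differentiable with Jacobian $\nabla F(x)$, $h\colon\mathbf{Y}\to\mathbb{R}$ convex and $\eta$-Lipschitz with respect to a norm $|||\cdot|||$ on $\mathbf{Y}$. Set $f=h\circ F$, $f_x(y)=h(F(x)+\nabla F(x)(y-x))$, and assume $\mathcal{X}^*:=\operatorname{argmin}_{\mathcal{X}}f\ne\emptyset$ and constants $\mu,\rho>0$ with $|f(y)-f_x(y)|\le\frac\rho2\|y-x\|^2$ for all $x,y\in\mathcal{X}$ and $f(x)-\min_{\mathcal{X}}f\ge\mu\,\mathrm{dist}(x,\mathcal{X}^* )$ for all $x\in\mathcal{X}$. Fix $e\in\mathbf{Y}$ and set $\tilde f(x)=h(F(x)+e)$, $\varepsilon:=\eta|||e|||$, and $\partial\tilde f(x):=\nabla F(x)^*\partial h(F(x)+e)$ (convex subdifferential of $h$). $\mathrm{proj}_{\mathcal{X}}$ is the Euclidean projection and $\mathrm{dist}$ the Euclidean distance. *)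

From Stdlib Require Import Reals ClassicalEpsilon.
From mathcomp Require Import all_boot.
Set Implicit Arguments. Unset Strict Implicit.
Open Scope R_scope.

Definition vec (n : nat) := 'I_n -> R.
Definition vzero {n : nat} : vec n := fun _ => 0.
Definition vadd {n : nat} (x y : vec n) : vec n := fun i => x i + y i.
Definition vsub {n : nat} (x y : vec n) : vec n := fun i => x i - y i.
Definition vscale {n : nat} (c : R) (x : vec n) : vec n := fun i => c * x i.
Definition dot {n : nat} (x y : vec n) : R := \big[Rplus/0]_(i < n) (x i * y i).
Definition norm2 {n : nat} (x : vec n) : R := sqrt (dot x x).

Definition mat (m n : nat) := 'I_m -> 'I_n -> R.
Definition mulmv {m n : nat} (A : mat m n) (v : vec n) : vec m :=
  fun i => \big[Rplus/0]_(j < n) (A i j * v j).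
(* adjoint (transpose) A^* w, adjoint w.r.t. the Euclidean inner products *)
Definition mulmtv {m n : nat} (A : mat m n) (w : vec m) : vec n :=
  fun j => \big[Rplus/0]_(i < m) (A i j * w i).

Definition is_closed {n : nat} (S : vec n -> Prop) : Prop :=
  forall x, (forall eps, 0 < eps -> exists z, S z /\ norm2 (vsub z x) < eps) -> S x.
Definition is_convex_set {n : nat} (S : vec n -> Prop) : Prop :=
  forall x y t, S x -> S y -> 0 <= t <= 1 ->
    S (vadd (vscale t x) (vscale (1 - t) y)).

Definition is_convex_fun {m : nat} (h : vec m -> R) : Prop :=
  forall x y t, 0 <= t <= 1 ->
    h (vadd (vscale t x) (vscale (1 - t) y)) <= t * h x + (1 - t) * h y.

Definition is_norm {m : nat} (N : vec m -> R) : Prop :=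
  (forall x, N x = 0 -> x = vzero) /\
  (forall c x, N (vscale c x) = Rabs c * N x) /\
  (forall x y, N (vadd x y) <= N x + N y).

Definition lipschitz_wrt {m : nat} (N : vec m -> R) (eta : R) (h : vec m -> R) : Prop :=
  forall y z, Rabs (h y - h z) <= eta * N (vsub y z).

Definition has_jacobian {n m : nat} (F : vec n -> vec m) (J : vec n -> mat m n) : Prop :=
  forall x eps, 0 < eps -> exists del, 0 < del /\
    forall y, norm2 (vsub y x) < del ->
      norm2 (vsub (vsub (F y) (F x)) (mulmv (J x) (vsub y x))) <= eps * norm2 (vsub y x).
Definition jacobian_continuous {n m : nat} (J : vec n -> mat m n) : Prop :=
  forall x i j eps, 0 < eps -> exists del, 0 < del /\
    forall y, norm2 (vsub y x) < del -> Rabs (J y i j - J x i j) < eps.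

Definition is_glb (A : R -> Prop) (m : R) : Prop :=
  (forall a, A a -> m <= a) /\ (forall b, (forall a, A a -> b <= a) -> b <= m).
Definition Inf (A : R -> Prop) : R := epsilon (inhabits 0) (fun m => is_glb A m).
Definition Sup (A : R -> Prop) : R := epsilon (inhabits 0) (fun m => is_lub A m).

Definition set_dist {n : nat} (S : vec n -> Prop) (x : vec n) : R :=
  Inf (fun d => exists z, S z /\ d = norm2 (vsub x z)).

Definition argmin {n : nat} (X : vec n -> Prop) (f : vec n -> R) : vec n -> Prop :=
  fun z => X z /\ forall y, X y -> f z <= f y.

Definition is_proj {n : nat} (S : vec n -> Prop) (y p : vec n) : Prop :=
  S p /\ forall z, S z -> norm2 (vsub y p) <= norm2 (vsub y z).

Definition subdiff {m : nat} (h : vec m -> R) (y v : vec m) : Prop :=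
  forall z, h y + dot v (vsub z y) <= h z.

(* partial f~(x) := grad F(x)^* partial h(F(x) + e) *)
Definition subdiff_pert {n m : nat} (h : vec m -> R) (F : vec n -> vec m)
  (J : vec n -> mat m n) (e : vec m) (x g : vec n) : Prop :=
  exists v, subdiff h (vadd (F x) e) v /\ g = mulmtv (J x) v.

From HB Require Import structures.
From Stdlib Require Import Reals Lra FunctionalExtensionality ClassicalEpsilon.
From mathcomp Require Import all_boot.
Set Implicit Arguments. Unset Strict Implicit.
Open Scope R_scope.

(* Write d(y) = dist(y, X* ), gap(y) = f~(y) - min f and eps = eta |||e|||.
   For y in X and g in the perturbed subdifferential at y, convexity of h,
   its Lipschitz continuity and the weak-convexity bound give the approximate
   subgradient inequality <g, y - z> >= gap(y) - rho/2 |y - z|^2 - eps for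
   every minimizer z, while sharpness gives gap(y) >= mu d(y) - eps.  In the
   tube T1 these force g <> 0, and, with the fact that projecting onto a
   convex set moves closer to all of its points, they bound one Polyak step:
     d(x+)^2 <= d(y)^2 - gap/|g|^2 (gap - rho d(y)^2 - 2 eps).
   Arithmetic on the tube constraints turns this into the factor
   1 - 13 tau^2/56 <= 1, so the iterates stay in the tube, and induction on k
   gives the theorem.  (The hypothesis eps <= mu^2/(14 rho) only makes the
   tube nonempty; the argument uses x_0 in T1 directly.) *)

HB.instance Definition _ :=
  Monoid.isComLaw.Build R 0 Rplus
    (fun a b c => esym (Rplus_assoc a b c)) Rplus_comm Rplus_0_l.

Ltac vec_ext :=
  apply: functional_extensionality => ?; rewrite /vadd /vsub /vscale; ring.

Lemma sumD n (F G : 'I_n -> R) :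
  \big[Rplus/0]_(i < n) (F i + G i)
  = \big[Rplus/0]_(i < n) F i + \big[Rplus/0]_(i < n) G i.
Proof. by rewrite big_split. Qed.

Lemma sumZ n c (F : 'I_n -> R) :
  \big[Rplus/0]_(i < n) (c * F i) = c * \big[Rplus/0]_(i < n) F i.
Proof.
elim/big_rec2: _ => [|i y1 y2 _ ->]; first by rewrite Rmult_0_r.
by rewrite Rmult_plus_distr_l.
Qed.

Lemma sum_ge0 n (P : pred 'I_n) (F : 'I_n -> R) :
  (forall i, 0 <= F i) -> 0 <= \big[Rplus/0]_(i < n | P i) F i.
Proof.
move=> F_ge0; apply: (big_ind (fun s => 0 <= s)) => //; [lra | move=> s t; lra].
Qed.

Lemma dot_sym n (a b : vec n) : dot a b = dot b a.
Proof. by rewrite /dot; apply: eq_bigr => i _; apply: Rmult_comm. Qed.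

Lemma dot_scalel n s (a c : vec n) : dot (vscale s a) c = s * dot a c.
Proof. by rewrite /dot -sumZ; apply: eq_bigr => i _; rewrite /vscale; ring. Qed.

Lemma dot_subl n (a b c : vec n) : dot (vsub a b) c = dot a c - dot b c.
Proof.
rewrite /dot (eq_bigr (fun i => a i * c i + (-1) * (b i * c i))); last first.
  by move=> i _; rewrite /vsub; ring.
by rewrite sumD sumZ; ring.
Qed.

Lemma dot_scaler n s (a c : vec n) : dot c (vscale s a) = s * dot c a.
Proof. by rewrite dot_sym dot_scalel dot_sym. Qed.

Lemma dot_subr n (a b c : vec n) : dot c (vsub a b) = dot c a - dot c b.
Proof. by rewrite dot_sym dot_subl (dot_sym a) (dot_sym b). Qed.

Lemma dot0l n (a : vec n) : dot vzero a = 0.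
Proof.
rewrite /dot (eq_bigr (fun i => 0 * a i)); last by move=> i _; rewrite /vzero.
by rewrite sumZ Rmult_0_l.
Qed.

Lemma dot_ge0 n (a : vec n) : 0 <= dot a a.
Proof. by apply: sum_ge0 => i; apply: Rle_0_sqr. Qed.

Lemma dot_pos n (a : vec n) : a <> vzero -> 0 < dot a a.
Proof.
move=> a_neq0; case: (Rle_lt_dec (dot a a) 0) => // aa_le0; exfalso; apply: a_neq0.
apply: functional_extensionality => i; rewrite /vzero.
have ai_le : a i * a i <= dot a a.
  rewrite /dot (bigD1 i) //= -{1}(Rplus_0_r (a i * a i)).
  apply: Rplus_le_compat_l; apply: sum_ge0 => j; apply: Rle_0_sqr.
by have := Rle_0_sqr (a i); rewrite /Rsqr => ?; nra.
Qed.

Lemma dot_sub_scale n (u w : vec n) t :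
  dot (vsub u (vscale t w)) (vsub u (vscale t w))
  = dot u u - 2 * t * dot u w + t ^ 2 * dot w w.
Proof. by rewrite !dot_subl !dot_subr !dot_scalel !dot_scaler (dot_sym w u); ring. Qed.

Lemma dot_swap n (a b : vec n) : dot (vsub a b) (vsub a b) = dot (vsub b a) (vsub b a).
Proof.
have -> : vsub a b = vscale (-1) (vsub b a) by vec_ext.
by rewrite dot_scalel dot_scaler; ring.
Qed.

Lemma norm2_ge0 n (a : vec n) : 0 <= norm2 a.
Proof. exact: sqrt_pos. Qed.

Lemma norm2_sq n (a : vec n) : norm2 a ^ 2 = dot a a.
Proof. by rewrite /norm2 /= Rmult_1_r sqrt_sqrt //; apply: dot_ge0. Qed.

Lemma adjoint m n (A : mat m n) (w : vec m) (v : vec n) :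
  dot (mulmtv A w) v = dot w (mulmv A v).
Proof.
rewrite /dot /mulmtv /mulmv.
rewrite (eq_bigr (fun j => \big[Rplus/0]_(i < m) (A i j * w i * v j))); last first.
  by move=> j _; rewrite Rmult_comm -sumZ; apply: eq_bigr => i _; ring.
rewrite exchange_big /=; apply: eq_bigr => i _.
by rewrite -sumZ; apply: eq_bigr => j _; ring.
Qed.

Lemma Inf_spec (A : R -> Prop) :
  (exists a, A a) -> (exists b, forall a, A a -> b <= a) -> is_glb A (Inf A).
Proof.
move=> [a Aa] [b b_lb]; apply: (epsilon_spec (inhabits 0) (fun g => is_glb A g)).
have [l [l_ub l_least]] : {l | is_lub (fun y => A (- y)) l}.
  apply: completeness; first by exists (- b) => y /b_lb; lra.
  by exists (- a); rewrite Ropp_involutive.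
exists (- l); split=> [c Ac | c c_lb].
- have : - c <= l by apply: l_ub; rewrite Ropp_involutive.
  lra.
- have : l <= - c by apply: l_least => y /c_lb; lra.
  lra.
Qed.

Lemma Sup_spec (A : R -> Prop) :
  (exists a, A a) -> (exists b, forall a, A a -> a <= b) -> is_lub A (Sup A).
Proof.
move=> [a Aa] [b b_ub]; apply: (epsilon_spec (inhabits 0) (fun l => is_lub A l)).
have [l Hl] := completeness A (ex_intro _ b b_ub) (ex_intro _ a Aa).
by exists l.
Qed.

Section DistanceToSet.
Variables (n : nat) (S : vec n -> Prop).
Hypothesis S_nonempty : exists z, S z.

Lemma set_dist_glb x :
  is_glb (fun d => exists z, S z /\ d = norm2 (vsub x z)) (set_dist S x).
Proof.
apply: Inf_spec; last by exists 0 => _ [z [_ ->]]; apply: norm2_ge0.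
by case: S_nonempty => z Sz; exists (norm2 (vsub x z)), z.
Qed.

Lemma set_dist_ge0 x : 0 <= set_dist S x.
Proof. by case: (set_dist_glb x) => _; apply=> _ [z [_ ->]]; apply: norm2_ge0. Qed.

Lemma set_dist_sq_le x z : S z -> set_dist S x ^ 2 <= dot (vsub x z) (vsub x z).
Proof.
move=> Sz; rewrite -norm2_sq; apply: pow_incr; split; first exact: set_dist_ge0.
by case: (set_dist_glb x) => lb _; apply: lb; exists z.
Qed.

Lemma set_dist_sq_glb x c :
  (forall z, S z -> c <= dot (vsub x z) (vsub x z)) -> c <= set_dist S x ^ 2.
Proof.
move=> c_lb; case: (Rle_lt_dec c 0) => [c_le0 | c_gt0].
  by have := pow2_ge_0 (set_dist S x); lra.
have sqrt_c_le : sqrt c <= set_dist S x.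
  case: (set_dist_glb x) => _; apply=> _ [z [Sz ->]].
  rewrite -(sqrt_pow2 (norm2 (vsub x z))) ?norm2_sq; last exact: norm2_ge0.
  by apply: sqrt_le_1_alt; apply: c_lb.
have : sqrt c ^ 2 <= set_dist S x ^ 2 by apply: pow_incr; split=> //; apply: sqrt_pos.
by rewrite /= Rmult_1_r sqrt_sqrt; lra.
Qed.

Lemma set_dist_sq_affine x a b c : 0 < a ->
  (forall z, S z -> c <= a * dot (vsub x z) (vsub x z) + b) ->
  c <= a * set_dist S x ^ 2 + b.
Proof.
move=> a_gt0 c_le.
have scaled : a * ((c - b) / a) = c - b by field; lra.
suff : (c - b) / a <= set_dist S x ^ 2 by nra.
by apply: set_dist_sq_glb => z /c_le; nra.
Qed.
End DistanceToSet.

Lemma proj_obtuse n (X : vec n -> Prop) y p z :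
  is_convex_set X -> is_proj X y p -> X z -> dot (vsub y p) (vsub z p) <= 0.
Proof.
move=> X_convex [Xp p_min] Xz.
set u := vsub y p; set w := vsub z p.
have step_lb : forall t, 0 < t <= 1 -> 2 * dot u w <= t * dot w w.
  move=> t t_range.
  have Xq := X_convex z p t Xz Xp (conj (Rlt_le _ _ (proj1 t_range)) (proj2 t_range)).
  have := p_min _ Xq.
  have -> : vsub y (vadd (vscale t z) (vscale (1 - t) p)) = vsub u (vscale t w).
    by rewrite /u /w; vec_ext.
  move/(sqrt_le_0 _ _ (dot_ge0 _) (dot_ge0 _)); rewrite dot_sub_scale -/u => uu_le.
  by apply: (Rmult_le_reg_l t); nra.
case: (Rle_lt_dec (dot u w) 0) => // uw_gt0; exfalso.
have ww_ge0 := dot_ge0 w.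
case: (Rle_lt_dec (dot w w) (dot u w)) => [ww_le | ww_gt].
  by have := step_lb 1 ltac:(lra); lra.
have scaled : dot u w / dot w w * dot w w = dot u w by field; lra.
have t_gt0 : 0 < dot u w / dot w w by apply: Rdiv_lt_0_compat; lra.
by have := step_lb (dot u w / dot w w) ltac:(split; nra); lra.
Qed.

Lemma proj_closer n (X : vec n -> Prop) y p z :
  is_convex_set X -> is_proj X y p -> X z ->
  dot (vsub p z) (vsub p z) <= dot (vsub y z) (vsub y z).
Proof.
move=> X_convex proj_p Xz.
have obtuse := proj_obtuse X_convex proj_p Xz.
have flip : vsub z p = vscale (-1) (vsub p z) by vec_ext.
rewrite flip dot_scaler in obtuse.
have -> : vsub y z = vsub (vsub y p) (vscale (-1) (vsub p z)) by vec_ext.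
by rewrite dot_sub_scale; have := dot_ge0 (vsub y p); lra.
Qed.

Lemma tube_bounds mu rho eps d : 0 < mu -> 0 < rho -> 0 <= d ->
  14 * eps / mu < d < mu / (4 * rho) -> 14 * eps < mu * d /\ 4 * rho * d ^ 2 <= mu * d.
Proof.
move=> mu_gt0 rho_gt0 d_ge0 [d_lb d_ub].
have lb_id : 14 * eps / mu * mu = 14 * eps by field; lra.
have ub_id : mu / (4 * rho) * (4 * rho) = mu by field; lra.
have := Rmult_lt_compat_r mu _ _ mu_gt0 d_lb.
have := Rmult_lt_compat_r (4 * rho) _ _ ltac:(lra) d_ub.
by split; nra.
Qed.

(* The real-number core of the contraction: a Polyak step of length A/Z with
   Z <= L^2 decreases d^2 by at least 13 (mu/L)^2 d^2 / 56 inside the tube. *)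
Lemma polyak_contraction_arith mu rho eps d A Z L D2 :
  0 <= mu * d -> 14 * eps < mu * d -> 4 * rho * d ^ 2 <= mu * d ->
  A >= mu * d - eps -> 0 < Z -> Z <= L ^ 2 ->
  D2 <= d ^ 2 - A / Z * (A - rho * d ^ 2 - 2 * eps) ->
  D2 <= (1 - 13 * (mu / L) ^ 2 / 56) * d ^ 2.
Proof.
move=> md_ge0 eps_lt rho_le A_lb Z_gt0 Z_le D2_le.
have L2_gt0 : 0 < L ^ 2 by lra.
have L_neq0 : L <> 0 by move=> L0; rewrite L0 /= in L2_gt0; lra.
set B := A - rho * d ^ 2 - 2 * eps in D2_le.
have AB_lb : 13 / 56 * (mu * d) ^ 2 <= A * B.
  have A_ge : 13 / 14 * (mu * d) <= A by lra.
  have B_ge : 15 / 28 * (mu * d) <= B by rewrite /B; lra.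
  by nra.
have step_lb : A * B / L ^ 2 <= A / Z * B.
  rewrite (_ : A / Z * B = A * B * / Z); last by field; lra.
  apply: Rmult_le_compat_l; first by nra.
  exact: Rinv_le_contravar.
have : 13 / 56 * (mu * d) ^ 2 / L ^ 2 <= A * B / L ^ 2.
  by apply: Rmult_le_compat_r => //; apply/Rlt_le/Rinv_0_lt_compat.
have -> : 13 / 56 * (mu * d) ^ 2 / L ^ 2 = 13 * (mu / L) ^ 2 / 56 * d ^ 2 by field.
by lra.
Qed.

Lemma sq_contraction_le a b c :
  0 <= a -> 0 <= b -> c <= 1 -> b ^ 2 <= c * a ^ 2 -> b <= a.
Proof. by move=> a_ge0 b_ge0 c_le1 b_le; have := pow2_ge_0 a; nra. Qed.

Lemma lipschitz_shift m (N : vec m -> R) eta h u e :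
  lipschitz_wrt N eta h -> Rabs (h (vadd u e) - h u) <= eta * N e.
Proof.
move=> h_lip; have := h_lip (vadd u e) u.
by have -> : vsub (vadd u e) u = e by vec_ext.
Qed.

Lemma Rabs_le_both a b : Rabs a <= b -> - b <= a <= b.
Proof. by rewrite /Rabs; case: Rcase_abs => ? ?; split; lra. Qed.

Section PerturbedComposite.
Variables (n m : nat) (X : vec n -> Prop) (F : vec n -> vec m) (J : vec n -> mat m n).
Variables (h : vec m -> R) (N : vec m -> R) (eta mu rho fstar : R) (e : vec m).
Hypothesis X_convex : is_convex_set X.
Hypothesis h_lipschitz : lipschitz_wrt N eta h.
Hypothesis fstar_attained : exists z, X z /\ h (F z) = fstar.
Hypothesis fstar_lower : forall y, X y -> fstar <= h (F y).
Hypothesis mu_gt0 : 0 < mu.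
Hypothesis rho_gt0 : 0 < rho.
Hypothesis weakly_convex : forall x0 y, X x0 -> X y ->
  Rabs (h (F y) - h (vadd (F x0) (mulmv (J x0) (vsub y x0))))
    <= rho / 2 * norm2 (vsub y x0) ^ 2.
Hypothesis sharp : forall z, X z ->
  h (F z) - fstar >= mu * set_dist (argmin X (fun y => h (F y))) z.

Local Notation Xs := (argmin X (fun y => h (F y))).
Local Notation eps := (eta * N e).
Local Notation gap y := (h (vadd (F y) e) - fstar).
Local Notation tube z :=
  (X z /\ 14 * eps / mu < set_dist Xs z < mu / (4 * rho)).

Lemma argmin_value z : Xs z -> X z /\ h (F z) = fstar.
Proof.
move=> [Xz z_min]; split=> //; case: fstar_attained => z0 [Xz0 fz0].
by have := z_min _ Xz0; have := fstar_lower Xz; lra.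
Qed.

Lemma argmin_nonempty : exists z, Xs z.
Proof.
case: fstar_attained => z [Xz fz]; exists z; split=> // y Xy.
by rewrite fz; apply: fstar_lower.
Qed.

Lemma gap_sharp y : X y -> gap y >= mu * set_dist Xs y - eps.
Proof.
move=> Xy; have [shift_lb _] := Rabs_le_both (lipschitz_shift (F y) e h_lipschitz).
by have := sharp Xy; lra.
Qed.

(* Approximate subgradient inequality for the perturbed subdifferential:
   convexity of h at F(y) + e, the Lipschitz shift by e, and the
   weak-convexity bound on the linearization at y. *)
Lemma perturbed_subgradient_ineq y z g : X y -> X z -> subdiff_pert h F J e y g ->
  dot g (vsub y z)
    >= h (vadd (F y) e) - h (F z) - rho / 2 * dot (vsub y z) (vsub y z) - eps.
Proof.
move=> Xy Xz [v [v_subgrad ->]].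
set w := mulmv (J y) (vsub z y).
have convex_ineq := v_subgrad (vadd (vadd (F y) e) w).
have step_w : vsub (vadd (vadd (F y) e) w) (vadd (F y) e) = w by vec_ext.
rewrite step_w /w -adjoint -/w in convex_ineq.
have flip : vsub y z = vscale (-1) (vsub z y) by vec_ext.
rewrite {1}flip dot_scaler.
have shift := lipschitz_shift (vadd (F y) w) e h_lipschitz.
have swap_e : vadd (vadd (F y) w) e = vadd (vadd (F y) e) w by vec_ext.
rewrite swap_e in shift.
have [_ shift_ub] := Rabs_le_both shift.
have [model_lb _] := Rabs_le_both (weakly_convex Xy Xz).
by rewrite norm2_sq dot_swap -/w in model_lb; lra.
Qed.

(* In the tube 0 is not a perturbed subgradient: a zero subgradient would
   give gap <= eps + rho/2 d^2, which sharpness rules out. *)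
Lemma subgradient_nonzero y g : tube y -> subdiff_pert h F J e y g -> g <> vzero.
Proof.
move=> [Xy d_range] g_sub g0.
have d_ge0 := set_dist_ge0 argmin_nonempty y.
have [eps_lt rho_le] := tube_bounds mu_gt0 rho_gt0 d_ge0 d_range.
have md_ge0 : 0 <= mu * set_dist Xs y by apply: Rmult_le_pos; lra.
have : gap y - eps <= rho / 2 * set_dist Xs y ^ 2 + 0.
  apply: (set_dist_sq_affine argmin_nonempty) => [|z Xsz]; first lra.
  have [Xz fz] := argmin_value Xsz.
  have := perturbed_subgradient_ineq Xy Xz g_sub.
  by rewrite g0 dot0l fz; lra.
by have := gap_sharp Xy; lra.
Qed.

(* A projected Polyak step of length al = gap/|g|^2 satisfies, for every
   minimizer z, |x+ - z|^2 <= (1 + al rho)|y - z|^2 - al (gap - 2 eps);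
   taking the infimum over z bounds the new distance to X*. *)
Lemma polyak_step_dist y g p :
  X y -> subdiff_pert h F J e y g -> g <> vzero -> 0 <= gap y ->
  is_proj X (vsub y (vscale (gap y / norm2 g ^ 2) g)) p ->
  set_dist Xs p ^ 2 <= set_dist Xs y ^ 2
    - gap y / norm2 g ^ 2 * (gap y - rho * set_dist Xs y ^ 2 - 2 * eps).
Proof.
move=> Xy g_sub g_neq0 gap_ge0 proj_p.
rewrite norm2_sq in proj_p *.
have gg_gt0 := dot_pos g_neq0.
set al := gap y / dot g g in proj_p *.
have al_ge0 : 0 <= al by apply: Rmult_le_pos => //; apply/Rlt_le/Rinv_0_lt_compat.
have al_gg : al * dot g g = gap y by rewrite /al; field; lra.
suff : set_dist Xs p ^ 2
         <= (1 + al * rho) * set_dist Xs y ^ 2 + - (al * (gap y - 2 * eps)) by lra.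
apply: (set_dist_sq_affine argmin_nonempty) => [|z Xsz]; first nra.
have [Xz fz] := argmin_value Xsz.
have dist_p := set_dist_sq_le argmin_nonempty p Xsz.
have closer := proj_closer X_convex proj_p Xz.
have shift_z : vsub (vsub y (vscale al g)) z = vsub (vsub y z) (vscale al g) by vec_ext.
rewrite shift_z dot_sub_scale (dot_sym _ g) in closer.
have subgrad := perturbed_subgradient_ineq Xy Xz g_sub; rewrite fz in subgrad.
have := Rmult_le_compat_l al _ _ al_ge0 (Rge_le _ _ subgrad).
by nra.
Qed.

Lemma polyak_one_step L y g p :
  tube y -> subdiff_pert h F J e y g -> norm2 g <= L ->
  is_proj X (vsub y (vscale (gap y / norm2 g ^ 2) g)) p ->
  set_dist Xs p ^ 2 <= (1 - 13 * (mu / L) ^ 2 / 56) * set_dist Xs y ^ 2.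
Proof.
move=> [Xy d_range] g_sub g_le proj_p.
have g_neq0 := subgradient_nonzero (conj Xy d_range) g_sub.
have d_ge0 := set_dist_ge0 argmin_nonempty y.
have [eps_lt rho_le] := tube_bounds mu_gt0 rho_gt0 d_ge0 d_range.
have md_ge0 : 0 <= mu * set_dist Xs y by apply: Rmult_le_pos; lra.
have gap_lb := gap_sharp Xy.
have step := polyak_step_dist Xy g_sub g_neq0 ltac:(lra) proj_p.
apply: (polyak_contraction_arith md_ge0 eps_lt rho_le gap_lb _ _ step).
- by rewrite norm2_sq; apply: dot_pos.
- by apply: pow_incr; split=> //; apply: norm2_ge0.
Qed.

Section PolyakIterates.
Variables (x zeta : nat -> vec n) (L : R).
Hypothesis L_bound : forall z g, tube z -> subdiff_pert h F J e z g -> norm2 g <= L.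
Hypothesis x0_tube : tube (x 0%nat).
Hypothesis polyak_step : forall k, (forall j, (j < k)%nat -> zeta j <> vzero) ->
  subdiff_pert h F J e (x k) (zeta k) /\
  (zeta k <> vzero ->
     is_proj X (vsub (x k) (vscale (gap (x k) / norm2 (zeta k) ^ 2) (zeta k))) (x k.+1)).

Lemma iterate_contraction k :
  tube (x k) -> (forall j, (j < k)%nat -> zeta j <> vzero) ->
  zeta k <> vzero /\
  set_dist Xs (x k.+1) ^ 2 <= (1 - 13 * (mu / L) ^ 2 / 56) * set_dist Xs (x k) ^ 2.
Proof.
move=> xk_tube earlier.
have [g_sub proj_step] := polyak_step earlier.
have g_neq0 := subgradient_nonzero xk_tube g_sub.
by split=> //; apply: polyak_one_step xk_tube g_sub (L_bound xk_tube g_sub) (proj_step g_neq0).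
Qed.

(* Until an iterate enters the ball dist <= 14 eps/mu, the iterates stay in
   the tube (distances only decrease) and no zero subgradient is met. *)
Lemma iterates_in_tube k :
  (forall j, (j <= k)%nat -> 14 * eps / mu < set_dist Xs (x j)) ->
  tube (x k) /\ forall j, (j < k)%nat -> zeta j <> vzero.
Proof.
elim: k => [|k IH] far; first by split=> // j.
have [xk_tube earlier] : tube (x k) /\ forall j, (j < k)%nat -> zeta j <> vzero.
  by apply: IH => j j_le; apply: far; exact: leq_trans j_le (leqnSn k).
have [zk_neq0 contraction] := iterate_contraction xk_tube earlier.
have [_ proj_step] := polyak_step earlier.
have [X_next _] := proj_step zk_neq0.
split; last by move=> j; rewrite ltnS leq_eqVlt => /orP [/eqP -> // | /earlier].
split=> //; split; first exact: far.
have closer : set_dist Xs (x k.+1) <= set_dist Xs (x k).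
  apply: (sq_contraction_le _ _ _ contraction); try exact: set_dist_ge0 argmin_nonempty _.
  by have := pow2_ge_0 (mu / L); lra.
by case: xk_tube => _ [_ d_ub]; lra.
Qed.

Lemma polyak_linear_convergence k :
  (forall j, (j <= k)%nat -> 14 * eps / mu < set_dist Xs (x j)) ->
  zeta k <> vzero /\ tube (x k) /\
  set_dist Xs (x k.+1) ^ 2 <= (1 - 13 * (mu / L) ^ 2 / 56) * set_dist Xs (x k) ^ 2.
Proof.
move=> far; have [xk_tube earlier] := iterates_in_tube far.
by have [zk_neq0 contraction] := iterate_contraction xk_tube earlier.
Qed.
End PolyakIterates.
End PerturbedComposite.

Theorem theorem9p5
  (n m : nat) (X : vec n -> Prop) (F : vec n -> vec m) (J : vec n -> mat m n)
  (h : vec m -> R) (N : vec m -> R) (eta mu rho fstar : R) (e : vec m)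
  (x : nat -> vec n) (zeta : nat -> vec n)
  (HXne : exists z, X z) (HXcl : is_closed X) (HXcv : is_convex_set X)
  (HF : has_jacobian F J) (HJ : jacobian_continuous J)
  (Hhc : is_convex_fun h) (HN : is_norm N) (Hlip : lipschitz_wrt N eta h)
  (Hmin : (exists z, X z /\ h (F z) = fstar) /\ (forall y, X y -> fstar <= h (F y)))
  (Hmu : 0 < mu) (Hrho : 0 < rho)
  (Hwc : forall x0 y, X x0 -> X y ->
     Rabs (h (F y) - h (vadd (F x0) (mulmv (J x0) (vsub y x0))))
       <= rho / 2 * (norm2 (vsub y x0)) ^ 2)
  (Hsharp : forall z, X z ->
     h (F z) - fstar >= mu * set_dist (argmin X (fun y => h (F y))) z) :
  let f := fun y => h (F y) in
  let Xs := argmin X f in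
  let eps := eta * N e in
  let ft := fun y => h (vadd (F y) e) in
  let T1 := fun z => X z /\ 14 * eps / mu < set_dist Xs z < mu / (4 * rho) in
  let Lt := Sup (fun r => exists z g, T1 z /\ subdiff_pert h F J e z g /\ r = norm2 g) in
  let tau := mu / Lt in
  eps <= mu ^ 2 / (14 * rho) ->
  (exists B, forall z g, T1 z -> subdiff_pert h F J e z g -> norm2 g <= B) ->
  T1 (x 0%nat) ->
  (forall k, (forall j, (j < k)%nat -> zeta j <> vzero) ->
     subdiff_pert h F J e (x k) (zeta k) /\
     (zeta k <> vzero ->
        is_proj X
          (vsub (x k) (vscale ((ft (x k) - fstar) / (norm2 (zeta k)) ^ 2) (zeta k)))
          (x (S k)))) ->
  forall k, (forall j, (j <= k)%nat -> 14 * eps / mu < set_dist Xs (x j)) ->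
    zeta k <> vzero /\ T1 (x k) /\
    (set_dist Xs (x (S k))) ^ 2 <= (1 - 13 * tau ^ 2 / 56) * (set_dist Xs (x k)) ^ 2.
Proof.
move=> f Xs eps ft T1 Lt tau _ [B B_bound] x0_tube polyak_step.
have [fstar_attained fstar_lower] := Hmin.
have Lt_bound : forall z g, T1 z -> subdiff_pert h F J e z g -> norm2 g <= Lt.
  have [zeta0_sub _] := polyak_step 0%nat (fun j (j_lt : (j < 0)%nat) => False_ind _ (notF j_lt)).
  have Lt_lub : is_lub (fun r => exists z g, T1 z /\ subdiff_pert h F J e z g /\ r = norm2 g) Lt.
    apply: Sup_spec; first by exists (norm2 (zeta 0%nat)), (x 0%nat), (zeta 0%nat).
    by exists B => _ [z [g [Tz [g_sub ->]]]]; apply: B_bound Tz g_sub.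
  by move=> z g Tz g_sub; apply: (proj1 Lt_lub); exists z, g.
exact: (polyak_linear_convergence HXcv Hlip fstar_attained fstar_lower Hmu Hrho Hwc Hsharp
          Lt_bound x0_tube polyak_step).
Qed.
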